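(* Let $T$ be a ranked monad, $L$ a locale and $f\colon L\to\mathrm{LB}_0T$ a locale map. The pullback $L\times_{\mathrm{LB}_0T}\mathrm{LB}_1T$ of $f$ along the source map $\sigma\colon\mathrm{LB}_1T\to\mathrm{LB}_0T$ has frame of opens isomorphic to the pointwise-ordered poset of functions $h\colon T1\to\mathcal{O}(L)$ such that for all $m_1,m_2\in T1$ and every complemented open $b$ of $\mathrm{LB}_0T$, $m_1\sim_bm_2$ implies $h(m_1)\wedge f^{-1}(b)=h(m_2)\wedge f^{-1}(b)$.
   Context: Monads on $\mathbf{Set}$: sets $TA$, $\mathrm{return}$, $\mathbin{\gg\!=}\colon TA\times(TB)^A\to TB$ with monad laws; $t\gg s:=t\mathbin{\gg\!=}\lambda a.s$; ranked of rank $\kappa$: every $t\in TA$ is $t'\mathbin{\gg\!=}\lambda i.\mathrm{return}\,f(i)$ with $t'\in TI$, $|I|<\kappa$. $1=\{*\}$, $2=\{0,1\}$. Locales: opposite of frames, $\mathcal{O}(L)$ the frame, $f^{-1}$ the frame map of $f$. $\mathrm{LB}_0T$: frame presented by generators $[b]$ ($b\in T2$) with relations $[t\mapsto a]\wedge[t\mapsto a']=\bot$ ($a\ne a'$), $[t\gg\mathrm{return}\,a\mapsto a]=\top$, $[t\mathbin{\gg\!=}u\mapsto b]=\bigvee_a[t\mapsto a]\wedge[t\gg u(a)\mapsto b]$, $[t\mapsto a]:=[t\mathbin{\gg\!=}\lambda a'.\mathrm{return}(\delta_a(a'))]$. Trace equivalence: $[\![m\sim_1m']\!]=\bigvee\{[t\mapsto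 a]:|A|\le\kappa,t\in TA,u,u'\colon A\to T1,u(a)=u'(a),m=t\mathbin{\gg\!=}u,m'=t\mathbin{\gg\!=}u'\}$; $[\![m\sim m']\!]$ is the join over $k\ge1$ and chains $m=m_1,\ldots,m_k=m'$ of $\bigwedge_{i<k}[\![m_i\sim_1m_{i+1}]\!]$ (just $[\![m\sim_1m']\!]$ for $k=1$); $m\sim_bm'$ iff $b\le[\![m\sim m']\!]$. $\mathrm{LB}_1T$ has frame the pointwise-ordered functions $w\colon T1\to\mathcal{O}(\mathrm{LB}_0T)$ with $b\wedge w(m_1)=b\wedge w(m_2)$ whenever $b$ complemented and $m_1\sim_bm_2$; the source map $\sigma\colon\mathrm{LB}_1T\to\mathrm{LB}_0T$ is $\sigma^{-1}(u)=\mathrm{const}_u$. *)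

From Stdlib Require Import ClassicalEpsilon ProofIrrelevance FunctionalExtensionality List.

Set Implicit Arguments.

(* A locale L is represented by its frame of opens O(L); a locale map *)
(* f : L -> L' is represented by its frame map f^{-1} : O(L') -> O(L). *)
Record Frame := {
  fcar :> Type;
  fle : fcar -> fcar -> Prop;
  fjoin : (fcar -> Prop) -> fcar;
  fmeet : fcar -> fcar -> fcar;
  ftop : fcar;
  fle_refl : forall x, fle x x;
  fle_trans : forall x y z, fle x y -> fle y z -> fle x z;
  fle_antisym : forall x y, fle x y -> fle y x -> x = y;
  fjoin_ub : forall (S : fcar -> Prop) x, S x -> fle x (fjoin S);
  fjoin_lub : forall (S : fcar -> Prop) y, (forall x, S x -> fle x y) -> fle (fjoin S) y;
  fmeet_l : forall x y, fle (fmeet x y) x;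
  fmeet_r : forall x y, fle (fmeet x y) y;
  fmeet_glb : forall x y z, fle z x -> fle z y -> fle z (fmeet x y);
  ftop_max : forall x, fle x ftop;
  fdistr : forall x (S : fcar -> Prop),
      fmeet x (fjoin S) = fjoin (fun y => exists s, S s /\ y = fmeet x s)
}.

Arguments fle {f}.
Arguments fjoin {f}.
Arguments fmeet {f}.
Arguments ftop {f}.

Definition fbot (F : Frame) : F := @fjoin F (fun _ => False).

Definition frame_hom (A B : Frame) (g : A -> B) : Prop :=
  g ftop = ftop /\
  (forall x y, g (fmeet x y) = fmeet (g x) (g y)) /\
  (forall S : A -> Prop, g (fjoin S) = fjoin (fun y => exists s, S s /\ y = g s)).

Arguments frame_hom {A B}.

Definition complemented {F : Frame} (b : F) : Prop :=
  exists c : F, fmeet b c = fbot F /\ fjoin (fun x => x = b \/ x = c) = ftop.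

(* Pushout in the category of frames = pullback in the category of locales *)
Definition is_pushout {A B C P : Frame} (f : A -> B) (g : A -> C)
  (i1 : B -> P) (i2 : C -> P) : Prop :=
  frame_hom i1 /\ frame_hom i2 /\ (forall a, i1 (f a) = i2 (g a)) /\
  forall (Q : Frame) (j1 : B -> Q) (j2 : C -> Q),
    frame_hom j1 -> frame_hom j2 -> (forall a, j1 (f a) = j2 (g a)) ->
    exists k : P -> Q, frame_hom k /\ (forall b, k (i1 b) = j1 b) /\
      (forall c, k (i2 c) = j2 c) /\
      forall k' : P -> Q, frame_hom k' -> (forall b, k' (i1 b) = j1 b) ->
        (forall c, k' (i2 c) = j2 c) -> forall x, k' x = k x.

Record Monad := {
  mT :> Type -> Type;
  ret : forall A, A -> mT A;
  bind : forall A B, mT A -> (A -> mT B) -> mT B;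
  bind_ret_l : forall A B (a : A) (k : A -> mT B), bind (ret a) k = k a;
  bind_ret_r : forall A (t : mT A), bind t (@ret A) = t;
  bind_assoc : forall A B C (t : mT A) (k : A -> mT B) (l : B -> mT C),
      bind (bind t k) l = bind t (fun a => bind (k a) l)
}.

Arguments ret {m A}.
Arguments bind {m A B}.

Definition mthen (M : Monad) A B (t : M A) (s : M B) : M B := bind t (fun _ => s).

(* cardinalities relative to a cardinal kappa, given as a set K *)
Definition card_le (A K : Type) : Prop := exists f : A -> K, forall x y, f x = f y -> x = y.
Definition card_lt (A K : Type) : Prop := card_le A K /\ ~ card_le K A.

Definition ranked (M : Monad) (K : Type) : Prop :=
  forall A (t : M A), exists (I : Type) (t' : M I) (g : I -> A),
    card_lt I K /\ t = bind t' (fun i => ret (g i)).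

Definition delta (A : Type) (a a' : A) : bool :=
  if excluded_middle_informative (a' = a) then true else false.

Definition mapsto (M : Monad) A (t : M A) (a : A) : M bool :=
  bind t (fun a' => ret (delta a a')).

Arguments mapsto {M A}.
Arguments mthen {M A B}.

(* LB_0 T : frame presented by generators [b], b in T2, and relations *)
(* (characterised by its universal property)                          *)
Definition lb0_relations {M : Monad} {G : Frame} (g : M bool -> G) : Prop :=
  (forall A (t : M A) (a a' : A), a <> a' ->
      fmeet (g (mapsto t a)) (g (mapsto t a')) = fbot G) /\
  (forall A A' (t : M A') (a : A), g (mapsto (mthen t (ret a)) a) = ftop) /\
  (forall A B (t : M A) (u : A -> M B) (b : B),
      g (mapsto (bind t u) b) =
      fjoin (fun x => exists a : A,
                 x = fmeet (g (mapsto t a)) (g (mapsto (mthen t (u a)) b)))).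

Definition is_LB0 {M : Monad} {F0 : Frame} (gen : M bool -> F0) : Prop :=
  lb0_relations gen /\
  forall (G : Frame) (g : M bool -> G), lb0_relations g ->
    exists phi : F0 -> G, frame_hom phi /\ (forall b, phi (gen b) = g b) /\
      forall psi : F0 -> G, frame_hom psi -> (forall b, psi (gen b) = g b) ->
        forall x, psi x = phi x.

Definition sim1 {M : Monad} (K : Type) {F0 : Frame} (gen : M bool -> F0)
  (m m' : M unit) : F0 :=
  fjoin (fun x => exists (A : Type) (t : M A) (u u' : A -> M unit) (a : A),
     card_le A K /\ u a = u' a /\ m = bind t u /\ m' = bind t u' /\
     x = gen (mapsto t a)).

Fixpoint chain_steps {M : Monad} (K : Type) {F0 : Frame} (gen : M bool -> F0)
  (x : M unit) (rest : list (M unit)) : F0 :=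
  match rest with
  | nil => ftop
  | y :: r => fmeet (sim1 K gen x y) (chain_steps K gen y r)
  end.

(* value of the chain m = m_1, ..., m_k (rest = [m_2;...;m_k]);
   for k = 1 it is [[m ~1 m]] *)
Definition chain_val {M : Monad} (K : Type) {F0 : Frame} (gen : M bool -> F0)
  (m : M unit) (rest : list (M unit)) : F0 :=
  match rest with
  | nil => sim1 K gen m m
  | _ => chain_steps K gen m rest
  end.

Definition sim {M : Monad} (K : Type) {F0 : Frame} (gen : M bool -> F0)
  (m m' : M unit) : F0 :=
  fjoin (fun x => exists rest : list (M unit), last rest m = m' /\ x = chain_val K gen m rest).

Definition sim_b {M : Monad} (K : Type) {F0 : Frame} (gen : M bool -> F0)
  (b : F0) (m m' : M unit) : Prop := fle b (sim K gen m m').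

Definition lb1_compat {M : Monad} (K : Type) {F0 : Frame} (gen : M bool -> F0)
  (w : M unit -> F0) : Prop :=
  forall (b : F0) (m1 m2 : M unit), complemented b -> sim_b K gen b m1 m2 ->
    fmeet b (w m1) = fmeet b (w m2).

Section LB1.
Lemma fmeet_comm_le (F : Frame) (x y : F) : fle (fmeet x y) (fmeet y x).
Proof. apply fmeet_glb; [apply fmeet_r | apply fmeet_l]. Qed.

Lemma fmeet_dist_meet (F : Frame) (b x y : F) :
  fmeet b (fmeet x y) = fmeet (fmeet b x) (fmeet b y).
Proof.
  apply fle_antisym.
  - apply fmeet_glb; apply fmeet_glb.
    + apply fmeet_l.
    + eapply fle_trans; [apply fmeet_r | apply fmeet_l].
    + apply fmeet_l.
    + eapply fle_trans; [apply fmeet_r | apply fmeet_r].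
  - apply fmeet_glb.
    + eapply fle_trans; [apply fmeet_l | apply fmeet_l].
    + apply fmeet_glb.
      * eapply fle_trans; [apply fmeet_l | apply fmeet_r].
      * eapply fle_trans; [apply fmeet_r | apply fmeet_r].
Qed.
End LB1.

Definition LB1car {M : Monad} (K : Type) {F0 : Frame} (gen : M bool -> F0) : Type :=
  { w : M unit -> F0 | lb1_compat K gen w }.

Definition lb1_le {M : Monad} (K : Type) {F0 : Frame} (gen : M bool -> F0)
  (v w : LB1car K gen) : Prop := forall m, fle (proj1_sig v m) (proj1_sig w m).

Lemma lb1_top_compat {M : Monad} (K : Type) {F0 : Frame} (gen : M bool -> F0) :
  lb1_compat K gen (fun _ => ftop).
Proof. intros b m1 m2 _ _; reflexivity. Qed.

Lemma lb1_meet_compat {M : Monad} (K : Type) {F0 : Frame} (gen : M bool -> F0)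
  (v w : LB1car K gen) :
  lb1_compat K gen (fun m => fmeet (proj1_sig v m) (proj1_sig w m)).
Proof.
  destruct v as [v Hv]; destruct w as [w Hw]; simpl.
  intros b m1 m2 Hb Hs.
  rewrite (fmeet_dist_meet _ b (v m1)), (fmeet_dist_meet _ b (v m2)), (Hv b m1 m2 Hb Hs), (Hw b m1 m2 Hb Hs); reflexivity.
Qed.

Lemma lb1_join_compat {M : Monad} (K : Type) {F0 : Frame} (gen : M bool -> F0)
  (S : LB1car K gen -> Prop) :
  lb1_compat K gen (fun m => fjoin (fun x => exists w, S w /\ x = proj1_sig w m)).
Proof.
  intros b m1 m2 Hb Hs.
  rewrite !fdistr.
  apply fle_antisym; apply fjoin_lub; intros y [s [[w [Sw ->]] ->]];
    destruct w as [w Hw]; simpl.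
  - rewrite (Hw b m1 m2 Hb Hs). apply fjoin_ub. exists (w m2); split; auto.
    exists (exist _ w Hw); auto.
  - rewrite <- (Hw b m1 m2 Hb Hs). apply fjoin_ub. exists (w m1); split; auto.
    exists (exist _ w Hw); auto.
Qed.

Definition lb1_top {M : Monad} (K : Type) {F0 : Frame} (gen : M bool -> F0) : LB1car K gen :=
  exist _ _ (lb1_top_compat K gen).
Definition lb1_meet {M : Monad} (K : Type) {F0 : Frame} (gen : M bool -> F0)
  (v w : LB1car K gen) : LB1car K gen := exist _ _ (lb1_meet_compat v w).
Definition lb1_join {M : Monad} (K : Type) {F0 : Frame} (gen : M bool -> F0)
  (S : LB1car K gen -> Prop) : LB1car K gen := exist _ _ (lb1_join_compat S).

Lemma lb1_antisym {M : Monad} (K : Type) {F0 : Frame} (gen : M bool -> F0)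
  (v w : LB1car K gen) : lb1_le v w -> lb1_le w v -> v = w.
Proof.
  destruct v as [v Hv]; destruct w as [w Hw]; unfold lb1_le; simpl; intros H1 H2.
  apply subset_eq_compat. apply functional_extensionality; intro m.
  apply fle_antisym; auto.
Qed.

Definition LB1 {M : Monad} (K : Type) {F0 : Frame} (gen : M bool -> F0) : Frame.
Proof.
  refine (@Build_Frame (LB1car K gen) (@lb1_le M K F0 gen) (@lb1_join M K F0 gen)
            (@lb1_meet M K F0 gen) (lb1_top K gen) _ _ (@lb1_antisym M K F0 gen)
            _ _ _ _ _ _ _).
  - intros x m; apply fle_refl.
  - intros x y z H1 H2 m; eapply fle_trans; eauto.
  - intros S x Sx m; simpl. apply fjoin_ub. exists x; auto.
  - intros S y H m; simpl. apply fjoin_lub. intros z [w [Sw ->]]. apply H; auto.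
  - intros x y m; apply fmeet_l.
  - intros x y m; apply fmeet_r.
  - intros x y z H1 H2 m; apply fmeet_glb; auto.
  - intros x m; apply ftop_max.
  - intros x S. apply lb1_antisym; intro m; simpl.
    + rewrite fdistr. apply fjoin_lub. intros y [s [[w [Sw ->]] ->]].
      apply fjoin_ub. exists (lb1_meet x w); split; [exists w; auto | reflexivity].
    + apply fjoin_lub. intros y [t [[w [Sw ->]] ->]]; simpl.
      apply fmeet_glb; [apply fmeet_l |].
      eapply fle_trans; [apply fmeet_r |]. apply fjoin_ub. exists w; auto.
Defined.

Lemma const_compat {M : Monad} (K : Type) {F0 : Frame} (gen : M bool -> F0) (u : F0) :
  lb1_compat K gen (fun _ => u).
Proof. intros b m1 m2 _ _; reflexivity. Qed.

Definition sigma_inv {M : Monad} (K : Type) {F0 : Frame} (gen : M bool -> F0)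
  (u : F0) : LB1 K gen := exist _ (fun _ => u) (const_compat K gen u).

Definition pb_compat {M : Monad} (K : Type) {F0 : Frame} (gen : M bool -> F0)
  {OL : Frame} (finv : F0 -> OL) (h : M unit -> OL) : Prop :=
  forall (m1 m2 : M unit) (b : F0), complemented b -> sim_b K gen b m1 m2 ->
    fmeet (h m1) (finv b) = fmeet (h m2) (finv b).

Definition pb_opens {M : Monad} (K : Type) {F0 : Frame} (gen : M bool -> F0)
  {OL : Frame} (finv : F0 -> OL) : Type :=
  { h : M unit -> OL | pb_compat K gen finv h }.

Definition pb_le {M : Monad} (K : Type) {F0 : Frame} (gen : M bool -> F0)
  {OL : Frame} (finv : F0 -> OL) (h h' : pb_opens K gen finv) : Prop :=
  forall m, fle (proj1_sig h m) (proj1_sig h' m).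

(* The functions h of the statement form a frame Q, and a |-> const a, w |-> f^{-1} o w make it a
   cocone over O(L) <- O(LB_0 T) -> O(LB_1 T).  Trace equivalence [[m ~ m']] is reflexive, symmetric
   and transitive, and compatibility of h gives h m /\ f^{-1}[[m ~ m']] <= h m'.  Hence
   e_m := [[- ~ m]] is an open of LB_1 T and every h is the join over m of const (h m) /\ f^{-1} e_m;
   so a map out of Q is determined by the cocone, and h |-> \/_m l1 (h m) /\ l2 e_m is the mediating
   map to any cocone (l1, l2).  Thus Q is a pushout, hence isomorphic to P. *)
From Stdlib Require Import Classical ProofIrrelevance FunctionalExtensionality PropExtensionality List.

Set Implicit Arguments.
Unset Strict Implicit.

Lemma fmeet_comm (F : Frame) (x y : F) : fmeet x y = fmeet y x.
Proof. apply fle_antisym; apply fmeet_comm_le. Qed.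

Lemma fmeet_mono (F : Frame) (a a' b b' : F) :
  fle a a' -> fle b b' -> fle (fmeet a b) (fmeet a' b').
Proof.
  intros Ha Hb; apply fmeet_glb.
  - eapply fle_trans; [apply fmeet_l | exact Ha].
  - eapply fle_trans; [apply fmeet_r | exact Hb].
Qed.

Lemma fmeet_top_r (F : Frame) (x : F) : fmeet x ftop = x.
Proof. apply fle_antisym; [apply fmeet_l | apply fmeet_glb; [apply fle_refl | apply ftop_max]]. Qed.

Lemma fmeet_distr_r (F : Frame) (x y c : F) : fmeet (fmeet x y) c = fmeet (fmeet x c) (fmeet y c).
Proof. rewrite !(fmeet_comm _ c). apply fmeet_dist_meet. Qed.

Lemma fbot_le (F : Frame) (x : F) : fle (fbot F) x.
Proof. apply fjoin_lub; intros _ []. Qed.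

Lemma fjoin_ext (F : Frame) (S S' : F -> Prop) : (forall x, S x <-> S' x) -> fjoin S = fjoin S'.
Proof. intros H; f_equal; extensionality x; apply propositional_extensionality; auto. Qed.

Lemma fjoin_reindex (F : Frame) (I V : Type) (f : I -> V) (g : V -> F) :
  fjoin (fun x => exists v, (exists i, v = f i) /\ x = g v) = fjoin (fun x => exists i, x = g (f i)).
Proof.
  apply fjoin_ext; intros x; split.
  - intros [v [[i ->] ->]]; exists i; reflexivity.
  - intros [i ->]; exists (f i); split; [exists i |]; reflexivity.
Qed.

Lemma fjoin_family_ext (F : Frame) (I : Type) (f g : I -> F) :
  (forall i, f i = g i) -> fjoin (fun x => exists i, x = f i) = fjoin (fun x => exists i, x = g i).
Proof. intros H; replace g with f; [reflexivity | extensionality i; apply H]. Qed.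

Lemma fdistr_r (F : Frame) (x : F) (S : F -> Prop) :
  fmeet (fjoin S) x = fjoin (fun y => exists s, S s /\ y = fmeet s x).
Proof.
  rewrite fmeet_comm, fdistr. apply fjoin_ext; intros y; split;
    intros [s [Hs ->]]; exists s; split; auto; apply fmeet_comm.
Qed.

Lemma fmeet_join_le (F : Frame) (x y : F) (S : F -> Prop) :
  (forall s, S s -> fle (fmeet x s) y) -> fle (fmeet x (fjoin S)) y.
Proof. intros H; rewrite fdistr; apply fjoin_lub; intros z [s [Hs ->]]; auto. Qed.

Lemma fjoin_meet_le (F : Frame) (x y : F) (S : F -> Prop) :
  (forall s, S s -> fle (fmeet s x) y) -> fle (fmeet (fjoin S) x) y.
Proof. intros H; rewrite fdistr_r; apply fjoin_lub; intros z [s [Hs ->]]; auto. Qed.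

Lemma fjoin_meet_join_le (F : Frame) (y : F) (S S' : F -> Prop) :
  (forall s s', S s -> S' s' -> fle (fmeet s s') y) -> fle (fmeet (fjoin S) (fjoin S')) y.
Proof. intros H; apply fjoin_meet_le; intros s Hs; apply fmeet_join_le; auto. Qed.

Lemma frame_hom_top (A B : Frame) (g : A -> B) : frame_hom g -> g ftop = ftop.
Proof. intros Hg; apply Hg. Qed.

Lemma frame_hom_meet (A B : Frame) (g : A -> B) :
  frame_hom g -> forall x y, g (fmeet x y) = fmeet (g x) (g y).
Proof. intros Hg; apply Hg. Qed.

Lemma frame_hom_join (A B : Frame) (g : A -> B) :
  frame_hom g -> forall S, g (fjoin S) = fjoin (fun y => exists s, S s /\ y = g s).
Proof. intros Hg; apply Hg. Qed.

Lemma frame_hom_family (A B : Frame) (g : A -> B) (I : Type) (f : I -> A) :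
  frame_hom g -> g (fjoin (fun x => exists i, x = f i)) = fjoin (fun y => exists i, y = g (f i)).
Proof. intros Hg; rewrite (frame_hom_join Hg); apply fjoin_reindex. Qed.

Lemma frame_hom_mono (A B : Frame) (g : A -> B) :
  frame_hom g -> forall x y, fle x y -> fle (g x) (g y).
Proof.
  intros Hg x y Hxy.
  assert (E : fmeet x y = x)
    by (apply fle_antisym; [apply fmeet_l | apply fmeet_glb; [apply fle_refl | exact Hxy]]).
  rewrite <- E, (frame_hom_meet Hg). apply fmeet_r.
Qed.

Lemma frame_hom_id (F : Frame) : frame_hom (fun x : F => x).
Proof.
  split; [reflexivity |]. split; [reflexivity |]. intros S. apply fjoin_ext.
  intros x; split; [intros Sx; exists x; auto | intros [s [Ss ->]]; exact Ss].
Qed.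

Lemma frame_hom_comp (A B C : Frame) (g : A -> B) (h : B -> C) :
  frame_hom g -> frame_hom h -> frame_hom (fun x => h (g x)).
Proof.
  intros Hg Hh. split; [rewrite (frame_hom_top Hg); apply (frame_hom_top Hh) |].
  split; [intros; rewrite (frame_hom_meet Hg); apply (frame_hom_meet Hh) |].
  intros S. rewrite (frame_hom_join Hg), (frame_hom_join Hh). apply fjoin_ext.
  intros x; split.
  - intros [s [[a [Sa ->]] ->]]. exists a; auto.
  - intros [a [Sa ->]]. exists (g a); split; [exists a; auto | reflexivity].
Qed.

Lemma pushout_endo_id (A B C P : Frame) (f : A -> B) (g : A -> C) (i1 : B -> P) (i2 : C -> P)
  (u : P -> P) :
  is_pushout f g i1 i2 -> frame_hom u ->
  (forall b, u (i1 b) = i1 b) -> (forall c, u (i2 c) = i2 c) -> forall x, u x = x.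
Proof.
  intros [Hi1 [Hi2 [Hc Huniv]]] Hu Hu1 Hu2 x.
  destruct (Huniv P i1 i2 Hi1 Hi2 Hc) as [k [_ [_ [_ Hk]]]].
  rewrite (Hk u Hu Hu1 Hu2 x). symmetry.
  apply (Hk (fun y => y)); [apply frame_hom_id | intros; reflexivity | intros; reflexivity].
Qed.

Lemma pushout_iso (A B C P Q : Frame) (f : A -> B) (g : A -> C)
  (i1 : B -> P) (i2 : C -> P) (j1 : B -> Q) (j2 : C -> Q) :
  is_pushout f g i1 i2 -> is_pushout f g j1 j2 ->
  exists (phi : P -> Q) (psi : Q -> P), frame_hom phi /\ frame_hom psi /\
    (forall x, psi (phi x) = x) /\ (forall y, phi (psi y) = y).
Proof.
  intros HP HQ.
  pose proof HP as [Hi1 [Hi2 [Hic HPuniv]]].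
  pose proof HQ as [Hj1 [Hj2 [Hjc HQuniv]]].
  destruct (HPuniv Q j1 j2 Hj1 Hj2 Hjc) as [phi [Hphi [Hphi1 [Hphi2 _]]]].
  destruct (HQuniv P i1 i2 Hi1 Hi2 Hic) as [psi [Hpsi [Hpsi1 [Hpsi2 _]]]].
  exists phi, psi. split; [exact Hphi |]. split; [exact Hpsi |]. split.
  - apply (pushout_endo_id HP (frame_hom_comp Hphi Hpsi)); intros; cbv beta.
    + rewrite Hphi1; apply Hpsi1.
    + rewrite Hphi2; apply Hpsi2.
  - apply (pushout_endo_id HQ (frame_hom_comp Hpsi Hphi)); intros; cbv beta.
    + rewrite Hpsi1; apply Hphi1.
    + rewrite Hpsi2; apply Hphi2.
Qed.

Lemma mthen_ret_unit (M : Monad) (m : M unit) : mthen m (ret tt) = m.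
Proof.
  unfold mthen. transitivity (bind m (@ret M unit)); [| apply bind_ret_r].
  f_equal. extensionality u. destruct u. reflexivity.
Qed.

Lemma ranked_card_unit (M : Monad) (K : Type) : ranked M K -> card_le unit K.
Proof.
  intros HK. destruct (classic (inhabited K)) as [[k0] | HnK].
  - exists (fun _ => k0). intros [] [] _; reflexivity.
  - exfalso. destruct (HK unit (ret tt)) as [I [_ [_ [[_ Hnot] _]]]]. apply Hnot.
    exists (fun k => False_rect I (HnK (inhabits k))).
    intros x. exfalso. exact (HnK (inhabits x)).
Qed.

Lemma last_cons (X : Type) (r : list X) (y d : X) : last (y :: r) d = last r y.
Proof.
  revert y d; induction r as [| a r IH]; intros y d; [reflexivity |].
  change (last (a :: r) d = last (a :: r) y). rewrite !IH. reflexivity.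
Qed.

Lemma last_app (X : Type) (r1 r2 : list X) (d : X) : last (r1 ++ r2) d = last r2 (last r1 d).
Proof.
  revert d; induction r1 as [| a r1 IH]; intros d; [reflexivity |].
  change ((a :: r1) ++ r2) with (a :: (r1 ++ r2)). rewrite !last_cons. apply IH.
Qed.

Section TraceEquivalence.
Variables (M : Monad) (K : Type) (F0 : Frame) (gen : M bool -> F0).
Hypothesis Hrel : lb0_relations gen.
Hypothesis HK : card_le unit K.

Local Notation S1 := (sim1 K gen).
Local Notation SIM := (sim K gen).
Local Notation CS := (chain_steps K gen).

Lemma gen_mapsto_unit (m : M unit) : gen (mapsto m tt) = ftop.
Proof.
  pose proof (proj1 (proj2 Hrel) unit unit m tt) as H. rewrite mthen_ret_unit in H. exact H.
Qed.

Lemma gen_mapsto_cover (A : Type) (t : M A) :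
  fle ftop (fjoin (fun x => exists a, x = gen (mapsto t a))).
Proof.
  pose proof (proj2 (proj2 Hrel) A unit t (fun _ => ret tt) tt) as H.
  change (bind t (fun _ => ret tt)) with (mthen t (ret tt)) in H.
  rewrite (proj1 (proj2 Hrel) unit A t tt) in H. rewrite H.
  apply fjoin_lub; intros x [a ->].
  eapply fle_trans; [apply fmeet_l |]. apply fjoin_ub. exists a; reflexivity.
Qed.

Lemma gen_mapsto_complemented (A : Type) (t : M A) (a : A) : complemented (gen (mapsto t a)).
Proof.
  exists (fjoin (fun x => exists a', a' <> a /\ x = gen (mapsto t a'))). split.
  - apply fle_antisym; [| apply fbot_le]. apply fmeet_join_le. intros s [a' [Hne ->]].
    rewrite (proj1 Hrel A t a a'); [apply fle_refl | intros E; apply Hne; symmetry; exact E].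
  - apply fle_antisym; [apply ftop_max |]. eapply fle_trans; [apply (gen_mapsto_cover t) |].
    apply fjoin_lub. intros x [a' ->]. destruct (classic (a' = a)) as [E | E].
    + subst. apply fjoin_ub. left; reflexivity.
    + eapply fle_trans; [| apply fjoin_ub; right; reflexivity]. apply fjoin_ub. exists a'; auto.
Qed.

Lemma sim1_refl (m : M unit) : S1 m m = ftop.
Proof.
  apply fle_antisym; [apply ftop_max |]. rewrite <- (gen_mapsto_unit m). apply fjoin_ub.
  exists unit, m, (@ret M unit), (@ret M unit), tt.
  split; [exact HK |]. split; [reflexivity |].
  split; [symmetry; apply bind_ret_r |]. split; [symmetry; apply bind_ret_r | reflexivity].
Qed.

Lemma sim1_sym_le (m m' : M unit) : fle (S1 m m') (S1 m' m).
Proof.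
  apply fjoin_lub; intros x [A [t [u [u' [a [Hc [Hu [Hm [Hm' ->]]]]]]]]].
  apply fjoin_ub. exists A, t, u', u, a.
  split; [exact Hc |]. split; [symmetry; exact Hu |].
  split; [exact Hm' |]. split; [exact Hm | reflexivity].
Qed.

Lemma chain_steps_le_sim (m : M unit) (r : list (M unit)) : fle (CS m r) (SIM m (last r m)).
Proof.
  destruct r as [| y r].
  - simpl. rewrite <- (sim1_refl m). apply fjoin_ub. exists nil. split; reflexivity.
  - apply fjoin_ub. exists (y :: r). split; reflexivity.
Qed.

Lemma chain_val_le_steps (m : M unit) (r : list (M unit)) : fle (chain_val K gen m r) (CS m r).
Proof. destruct r; unfold chain_val; simpl; [apply ftop_max | apply fle_refl]. Qed.

Lemma sim_le_of_chains (m m' : M unit) (y : F0) :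
  (forall r, last r m = m' -> fle (CS m r) y) -> fle (SIM m m') y.
Proof.
  intros H. apply fjoin_lub. intros x [r [Hl ->]].
  eapply fle_trans; [apply chain_val_le_steps | auto].
Qed.

Lemma chain_steps_app (m : M unit) (r1 r2 : list (M unit)) :
  fle (fmeet (CS m r1) (CS (last r1 m) r2)) (CS m (r1 ++ r2)).
Proof.
  revert m; induction r1 as [| y r1 IH]; intros m; [apply fmeet_r |].
  rewrite last_cons. simpl. apply fmeet_glb.
  - eapply fle_trans; [apply fmeet_l | apply fmeet_l].
  - eapply fle_trans; [| apply IH]. apply fmeet_mono; [apply fmeet_r | apply fle_refl].
Qed.

Lemma sim_refl (m : M unit) : SIM m m = ftop.
Proof. apply fle_antisym; [apply ftop_max | exact (chain_steps_le_sim m nil)]. Qed.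

Lemma sim1_le_sim (m m' : M unit) : fle (S1 m m') (SIM m m').
Proof.
  eapply fle_trans; [| apply (chain_steps_le_sim m (m' :: nil))]. simpl.
  apply fmeet_glb; [apply fle_refl | apply ftop_max].
Qed.

Lemma sim_trans (m1 m2 m3 : M unit) : fle (fmeet (SIM m1 m2) (SIM m2 m3)) (SIM m1 m3).
Proof.
  apply fjoin_meet_join_le. intros s s' [r [Hr ->]] [r' [Hr' ->]].
  eapply fle_trans; [apply fmeet_mono; apply chain_val_le_steps |]. subst m2.
  eapply fle_trans; [apply chain_steps_app |].
  rewrite <- Hr', <- last_app. apply chain_steps_le_sim.
Qed.

Lemma sim_sym (m m' : M unit) : SIM m m' = SIM m' m.
Proof.
  assert (Hle : forall m m', fle (SIM m m') (SIM m' m)).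
  { intros m0 m0'. apply sim_le_of_chains. intros r. revert m0.
    induction r as [| a r IH]; intros m0 Hl.
    - simpl in Hl. subst. simpl. rewrite sim_refl. apply fle_refl.
    - rewrite last_cons in Hl. simpl.
      eapply fle_trans; [| apply (sim_trans m0' a m0)]. apply fmeet_glb.
      + eapply fle_trans; [apply fmeet_r | apply IH; exact Hl].
      + eapply fle_trans; [apply fmeet_l |].
        eapply fle_trans; [apply sim1_sym_le | apply sim1_le_sim]. }
  apply fle_antisym; apply Hle.
Qed.

Lemma pb_compat_sim1_le (OL : Frame) (finv : F0 -> OL) (h : M unit -> OL) :
  frame_hom finv -> pb_compat K gen finv h ->
  forall m m', fle (fmeet (h m) (finv (S1 m m'))) (h m').
Proof.
  intros Hf Hh m m'. unfold sim1 at 1. rewrite (frame_hom_join Hf). apply fmeet_join_le.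
  intros s [x [[A [t [u [u' [a [Hc [Hu [Hm [Hm' ->]]]]]]]]] ->]].
  assert (Hs : sim_b K gen (gen (mapsto t a)) m m').
  { eapply fle_trans; [| apply sim1_le_sim]. apply fjoin_ub. exists A, t, u, u', a.
    split; [exact Hc |]. split; [exact Hu |]. split; [exact Hm |]. split; [exact Hm' | reflexivity]. }
  rewrite (Hh m m' _ (gen_mapsto_complemented t a) Hs). apply fmeet_l.
Qed.

Lemma pb_compat_sim_le (OL : Frame) (finv : F0 -> OL) (h : M unit -> OL) :
  frame_hom finv -> pb_compat K gen finv h ->
  forall m m', fle (fmeet (h m) (finv (SIM m m'))) (h m').
Proof.
  intros Hf Hh m m'.
  assert (Hchain : forall r m, fle (fmeet (h m) (finv (CS m r))) (h (last r m))).
  { induction r as [| y r IH]; intros m0; [apply fmeet_l |].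
    rewrite last_cons. simpl. rewrite (frame_hom_meet Hf).
    eapply fle_trans; [| apply (IH y)]. apply fmeet_glb.
    - eapply fle_trans; [| apply (pb_compat_sim1_le Hf Hh m0 y)]. apply fmeet_glb; [apply fmeet_l |].
      eapply fle_trans; [apply fmeet_r | apply fmeet_l].
    - eapply fle_trans; [apply fmeet_r | apply fmeet_r]. }
  unfold sim at 1. rewrite (frame_hom_join Hf). apply fmeet_join_le.
  intros s [x [[r [Hl ->]] ->]]. rewrite <- Hl. eapply fle_trans; [| apply (Hchain r m)].
  apply fmeet_mono; [apply fle_refl | apply (frame_hom_mono Hf); apply chain_val_le_steps].
Qed.

Lemma pb_compat_decomp (OL : Frame) (finv : F0 -> OL) (h : M unit -> OL) :
  frame_hom finv -> pb_compat K gen finv h ->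
  forall m', h m' = fjoin (fun x => exists m, x = fmeet (h m) (finv (SIM m' m))).
Proof.
  intros Hf Hh m'. apply fle_antisym.
  - apply fle_trans with (fmeet (h m') (finv (SIM m' m'))).
    + rewrite sim_refl, (frame_hom_top Hf), fmeet_top_r. apply fle_refl.
    + apply fjoin_ub. exists m'. reflexivity.
  - apply fjoin_lub. intros x [m ->]. rewrite sim_sym. apply pb_compat_sim_le; assumption.
Qed.

Lemma lb1_compat_pb (w : M unit -> F0) : lb1_compat K gen w -> pb_compat K gen (fun x => x) w.
Proof.
  intros Hw m1 m2 b Hb Hs. rewrite (fmeet_comm (w m1)), (fmeet_comm (w m2)). apply Hw; auto.
Qed.

Lemma sim_open_compat (m : M unit) : lb1_compat K gen (fun m' => SIM m' m).
Proof.
  intros b m1 m2 _ Hs. apply fle_antisym; apply fmeet_glb; try apply fmeet_l.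
  - eapply fle_trans; [| apply (sim_trans m2 m1 m)].
    apply fmeet_mono; [rewrite sim_sym; exact Hs | apply fle_refl].
  - eapply fle_trans; [| apply (sim_trans m1 m2 m)]. apply fmeet_mono; [exact Hs | apply fle_refl].
Qed.

Definition sim_open (m : M unit) : LB1 K gen := exist _ (fun m' => SIM m' m) (sim_open_compat m).

Lemma sim_open_cover : (ftop : LB1 K gen) = fjoin (fun w => exists m, w = sim_open m).
Proof.
  apply fle_antisym; [| apply ftop_max]. intros m'. simpl. rewrite fjoin_reindex.
  apply fle_trans with (SIM m' m'); [rewrite sim_refl; apply fle_refl |].
  apply fjoin_ub. exists m'. reflexivity.
Qed.

Lemma lb1_decomp (w : LB1 K gen) :
  w = fjoin (fun v => exists m, v = fmeet (sigma_inv K gen (proj1_sig w m)) (sim_open m)).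
Proof.
  apply lb1_antisym; intros m'; simpl; rewrite fjoin_reindex; simpl;
    rewrite <- (pb_compat_decomp (frame_hom_id F0) (lb1_compat_pb (proj2_sig w)) m');
    apply fle_refl.
Qed.

Lemma sim_open_meet_le (m n : M unit) :
  fle (fmeet (sim_open m) (sim_open n)) (sigma_inv K gen (SIM n m)).
Proof. intros m'. simpl. rewrite (sim_sym m' n), fmeet_comm. apply sim_trans. Qed.

Section PullbackFrame.
Variables (OL : Frame) (finv : F0 -> OL).

Local Notation PO := (pb_opens K gen finv).

Lemma pb_eq (h h' : PO) : proj1_sig h = proj1_sig h' -> h = h'.
Proof.
  destruct h as [h Hh], h' as [h' Hh']; simpl; intros E; subst h'; f_equal; apply proof_irrelevance.
Qed.

Lemma pb_compat_const (a : OL) : pb_compat K gen finv (fun _ => a).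
Proof. intros m1 m2 b _ _; reflexivity. Qed.

Lemma pb_compat_meet (h h' : PO) :
  pb_compat K gen finv (fun m => fmeet (proj1_sig h m) (proj1_sig h' m)).
Proof.
  destruct h as [h Hh], h' as [h' Hh']; simpl. intros m1 m2 b Hb Hs.
  rewrite (fmeet_distr_r (h m1)), (fmeet_distr_r (h m2)), (Hh m1 m2 b Hb Hs), (Hh' m1 m2 b Hb Hs).
  reflexivity.
Qed.

Lemma pb_compat_join (S : PO -> Prop) :
  pb_compat K gen finv (fun m => fjoin (fun x => exists w, S w /\ x = proj1_sig w m)).
Proof.
  intros m1 m2 b Hb Hs. rewrite !fdistr_r.
  apply fle_antisym; apply fjoin_lub; intros y [s [[[w Hw] [Sw ->]] ->]]; simpl.
  - rewrite (Hw m1 m2 b Hb Hs). apply fjoin_ub. exists (w m2); split; auto.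
    exists (exist _ w Hw); auto.
  - rewrite <- (Hw m1 m2 b Hb Hs). apply fjoin_ub. exists (w m1); split; auto.
    exists (exist _ w Hw); auto.
Qed.

Definition pb_top : PO := exist _ _ (pb_compat_const ftop).
Definition pb_meet (h h' : PO) : PO := exist _ _ (pb_compat_meet h h').
Definition pb_join (S : PO -> Prop) : PO := exist _ _ (pb_compat_join S).

Lemma pb_le_antisym (v w : PO) : pb_le v w -> pb_le w v -> v = w.
Proof. intros H1 H2. apply pb_eq. extensionality m. apply fle_antisym; auto. Qed.

Definition pb_frame : Frame.
Proof.
  refine (@Build_Frame PO (@pb_le M K F0 gen OL finv) pb_join pb_meet pb_top _ _ pb_le_antisym
            _ _ _ _ _ _ _).
  - intros x m; apply fle_refl.
  - intros x y z H1 H2 m; eapply fle_trans; eauto.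
  - intros S x Sx m; simpl. apply fjoin_ub. exists x; auto.
  - intros S y H m; simpl. apply fjoin_lub. intros z [w [Sw ->]]. apply H; auto.
  - intros x y m; apply fmeet_l.
  - intros x y m; apply fmeet_r.
  - intros x y z H1 H2 m; apply fmeet_glb; auto.
  - intros x m; apply ftop_max.
  - intros x S. apply pb_le_antisym; intros m; simpl.
    + rewrite fdistr. apply fjoin_lub. intros y [s [[w [Sw ->]] ->]].
      apply fjoin_ub. exists (pb_meet x w); split; [exists w; auto | reflexivity].
    + apply fjoin_lub. intros y [t [[w [Sw ->]] ->]]; simpl.
      apply fmeet_glb; [apply fmeet_l |].
      eapply fle_trans; [apply fmeet_r |]. apply fjoin_ub. exists w; auto.
Defined.

Definition pb_inl (a : OL) : pb_frame := exist _ (fun _ => a) (pb_compat_const a).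

Lemma pb_inl_hom : frame_hom pb_inl.
Proof.
  split; [apply pb_eq; reflexivity |]. split; [intros; apply pb_eq; reflexivity |].
  intros S. apply pb_eq; simpl; extensionality m. apply fjoin_ext. intros x; split.
  - intros Sx; exists (pb_inl x); split; [exists x; auto | reflexivity].
  - intros [w [[s [Ss ->]] ->]]; exact Ss.
Qed.

Hypothesis Hf : frame_hom finv.

Lemma pb_compat_comp (w : LB1 K gen) : pb_compat K gen finv (fun m => finv (proj1_sig w m)).
Proof.
  destruct w as [w Hw]; simpl; intros m1 m2 b Hb Hs.
  rewrite <- !(frame_hom_meet Hf), (fmeet_comm (w m1)), (fmeet_comm (w m2)), (Hw b m1 m2 Hb Hs).
  reflexivity.
Qed.

Definition pb_inr (w : LB1 K gen) : pb_frame := exist _ _ (pb_compat_comp w).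

Lemma pb_inr_hom : frame_hom pb_inr.
Proof.
  split; [apply pb_eq; simpl; extensionality m; apply (frame_hom_top Hf) |].
  split; [intros; apply pb_eq; simpl; extensionality m; apply (frame_hom_meet Hf) |].
  intros S. apply pb_eq; simpl; extensionality m. rewrite (frame_hom_join Hf). apply fjoin_ext.
  intros x; split.
  - intros [s [[w [Sw ->]] ->]]; exists (pb_inr w); split; [exists w; auto | reflexivity].
  - intros [v [[w [Sw ->]] ->]]; exists (proj1_sig w m); split; [exists w; auto | reflexivity].
Qed.

Lemma pb_inl_inr (a : F0) : pb_inl (finv a) = pb_inr (sigma_inv K gen a).
Proof. apply pb_eq; reflexivity. Qed.

Lemma pb_decomp (h : pb_frame) :
  h = fjoin (fun x => exists m, x = fmeet (pb_inl (proj1_sig h m)) (pb_inr (sim_open m))).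
Proof.
  apply pb_eq. extensionality m'. simpl. rewrite fjoin_reindex. simpl.
  apply (pb_compat_decomp Hf (proj2_sig h)).
Qed.

Section Glue.
Variables (R : Frame) (l1 : OL -> R) (l2 : LB1 K gen -> R).

Definition glue (h : pb_frame) : R :=
  fjoin (fun x => exists m, x = fmeet (l1 (proj1_sig h m)) (l2 (sim_open m))).

Lemma pb_hom_eq_glue (k : pb_frame -> R) :
  frame_hom k -> (forall a, k (pb_inl a) = l1 a) -> (forall w, k (pb_inr w) = l2 w) ->
  forall h, k h = glue h.
Proof.
  intros Hk Hk1 Hk2 h. rewrite (pb_decomp h) at 1. rewrite (frame_hom_family _ Hk).
  apply fjoin_family_ext; intros m. rewrite (frame_hom_meet Hk), Hk1, Hk2. reflexivity.
Qed.

Hypotheses (Hl1 : frame_hom l1) (Hl2 : frame_hom l2).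
Hypothesis Hl : forall a, l1 (finv a) = l2 (sigma_inv K gen a).

Lemma glue_mono (h h' : pb_frame) : fle h h' -> fle (glue h) (glue h').
Proof.
  intros H. apply fjoin_lub. intros x [m ->].
  apply fle_trans with (fmeet (l1 (proj1_sig h' m)) (l2 (sim_open m))).
  - apply fmeet_mono; [apply (frame_hom_mono Hl1); apply H | apply fle_refl].
  - apply fjoin_ub. exists m; reflexivity.
Qed.

Lemma glue_inl (a : OL) : glue (pb_inl a) = l1 a.
Proof.
  transitivity (fmeet (l1 a) (l2 (fjoin (fun w => exists m, w = sim_open m)))).
  - rewrite (frame_hom_family _ Hl2), fdistr, fjoin_reindex. reflexivity.
  - rewrite <- sim_open_cover, (frame_hom_top Hl2). apply fmeet_top_r.
Qed.

Lemma glue_inr (w : LB1 K gen) : glue (pb_inr w) = l2 w.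
Proof.
  rewrite (lb1_decomp w) at 2. rewrite (frame_hom_family _ Hl2).
  apply fjoin_family_ext; intros m. rewrite (frame_hom_meet Hl2), <- Hl. reflexivity.
Qed.

Lemma glue_join (S : pb_frame -> Prop) :
  glue (fjoin S) = fjoin (fun y => exists s, S s /\ y = glue s).
Proof.
  apply fle_antisym.
  - apply fjoin_lub. intros x [m ->]. simpl. rewrite (frame_hom_join Hl1). apply fjoin_meet_le.
    intros s [y [[w [Sw ->]] ->]]. apply fle_trans with (glue w).
    + apply fjoin_ub. exists m; reflexivity.
    + apply fjoin_ub. exists w; auto.
  - apply fjoin_lub. intros y [w [Sw ->]]. apply glue_mono. apply (fjoin_ub _ S w Sw).
Qed.

Lemma glue_meet (h h' : pb_frame) : glue (fmeet h h') = fmeet (glue h) (glue h').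
Proof.
  apply fle_antisym.
  - apply fmeet_glb; apply glue_mono; intros m; simpl; [apply fmeet_l | apply fmeet_r].
  - apply fjoin_meet_join_le. intros s s' [m ->] [n ->].
    (* on e_m /\ e_n, the value of h' at n can be moved to m *)
    assert (Hmn : fle (fmeet (l2 (sim_open m)) (l2 (sim_open n))) (l1 (finv (SIM n m)))).
    { rewrite <- (frame_hom_meet Hl2), Hl. apply (frame_hom_mono Hl2), sim_open_meet_le. }
    assert (Hh' : fle (fmeet (proj1_sig h' n) (finv (SIM n m))) (proj1_sig h' m))
      by apply (pb_compat_sim_le Hf (proj2_sig h')).
    apply fle_trans with (fmeet (l1 (proj1_sig (fmeet h h') m)) (l2 (sim_open m)));
      [| apply fjoin_ub; exists m; reflexivity].
    simpl. rewrite (frame_hom_meet Hl1). apply fmeet_glb; [apply fmeet_glb |].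
    + eapply fle_trans; [apply fmeet_l | apply fmeet_l].
    + eapply fle_trans; [| apply (frame_hom_mono Hl1 Hh')]. rewrite (frame_hom_meet Hl1).
      apply fmeet_glb; [eapply fle_trans; [apply fmeet_r | apply fmeet_l] |].
      eapply fle_trans; [| exact Hmn]. apply fmeet_mono; apply fmeet_r.
    + eapply fle_trans; [apply fmeet_l | apply fmeet_r].
Qed.

Lemma glue_hom : frame_hom glue.
Proof.
  split; [change (glue (pb_inl ftop) = ftop); rewrite glue_inl; apply (frame_hom_top Hl1) |].
  split; [apply glue_meet | apply glue_join].
Qed.

End Glue.

Lemma pb_frame_is_pushout : is_pushout finv (sigma_inv K gen) pb_inl pb_inr.
Proof.
  split; [apply pb_inl_hom |]. split; [apply pb_inr_hom |]. split; [apply pb_inl_inr |].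
  intros R l1 l2 Hl1 Hl2 Hl. exists (glue l1 l2).
  split; [apply glue_hom; assumption |].
  split; [apply glue_inl; assumption |].
  split; [apply glue_inr; assumption |].
  intros k Hk Hk1 Hk2. apply pb_hom_eq_glue; assumption.
Qed.

End PullbackFrame.
End TraceEquivalence.

Theorem lemma3p14 (M : Monad) (K : Type) (HK : ranked M K)
  (F0 : Frame) (gen : M bool -> F0) (HLB0 : is_LB0 gen)
  (OL : Frame) (finv : F0 -> OL) (Hf : frame_hom finv)
  (P : Frame) (i1 : OL -> P) (i2 : LB1 K gen -> P)
  (Hpo : is_pushout finv (sigma_inv K gen) i1 i2) :
  exists (phi : P -> pb_opens K gen finv) (psi : pb_opens K gen finv -> P),
    (forall x, psi (phi x) = x) /\ (forall h, phi (psi h) = h) /\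
    (forall x y : P, fle x y <-> pb_le (phi x) (phi y)).
Proof.
  pose proof (pb_frame_is_pushout (proj1 HLB0) (ranked_card_unit HK) Hf) as HQ.
  destruct (pushout_iso Hpo HQ) as [phi [psi [Hphi [Hpsi [Hpsi_phi Hphi_psi]]]]].
  exists phi, psi. split; [exact Hpsi_phi |]. split; [exact Hphi_psi |].
  intros x y; split; [apply (frame_hom_mono Hphi) |].
  intros H. rewrite <- (Hpsi_phi x), <- (Hpsi_phi y). exact (frame_hom_mono Hpsi H).
Qed.
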